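(* Let $a\in[-1,1/3]$, $a\neq0$. For $\theta\in(2\pi/3,\pi)$ define \[ \zeta(\theta)=\frac{(2a-1)\cos\theta+\sqrt{(1-4a)\cos^2\theta+a}}{1-4a\cos^2\theta},\qquad z(\theta)=\frac{a\zeta(\theta)}{(2\cos\theta+\zeta(\theta))(1+2\zeta(\theta)\cos\theta)}, \] where at the (possible) point $\theta=\cos^{-1}(-1/(2\sqrt a))$ (occurring when $1/4<a\le1/3$) $z$ is extended by continuity (this singularity is removable). Then $z(\theta)$ is increasing on $(2\pi/3,\pi)$. *)

From Stdlib Require Import Reals.
Open Scope R_scope.

Definition zeta (a t : R) : R :=
  ((2*a - 1) * cos t + sqrt ((1 - 4*a) * (cos t)^2 + a)) / (1 - 4*a*(cos t)^2).

Definition zfun (a t : R) : R :=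
  a * zeta a t / ((2 * cos t + zeta a t) * (1 + 2 * zeta a t * cos t)).

(** With [c = cos t] and [rho = sqrt (1 - 4a + a/c^2)] one has
    [sqrt ((1-4a) c^2 + a) = -c rho], and after eliminating [a] through
    [a (1 - 4c^2) = (rho^2 - 1) c^2] the function [z] becomes the cubic
    polynomial [a + (1+a) p/2 + p^2/2 + p^3/8] in [p = 4a/(rho - 1)].  Its
    singularity disappears, so this expression is the continuous extension.
    Monotonicity then splits in two: [p] increases as [c] decreases towards
    [-1] (the sign of [a] cancels in [a/(rho - 1)]), and [p] stays below its
    value [-4(1 + sqrt (1-3a))/3] at [c = -1], which lies left of the lower
    critical point of the cubic. *)

From Stdlib Require Import Reals Lra Psatz.
From Coquelicot Require Import Coquelicot.
Open Scope R_scope.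

Definition zcubic (a p : R) : R := a + (1 + a)*p/2 + p^2/2 + p^3/8.

Definition rho (a c : R) : R := sqrt (1 - 4*a + a/c^2).

Definition pcoord (a c : R) : R := 4*a/(rho a c - 1).

Definition zext (a t : R) : R := zcubic a (pcoord a (cos t)).

Lemma cos_bounds_2PI3_PI t : 2*PI/3 < t < PI -> -1 < cos t < -1/2.
Proof.
  intros [h1 h2]. pose proof PI_RGT_0.
  split.
  - rewrite <- cos_PI. apply cos_decreasing_1; lra.
  - rewrite <- cos_2PI3. apply cos_decreasing_1; lra.
Qed.

Lemma cos_decreasing_2PI3_PI s t : 2*PI/3 < s -> s < t -> t < PI -> cos t < cos s.
Proof. intros. pose proof PI_RGT_0. apply cos_decreasing_1; lra. Qed.

Lemma sign_sub_of_sign_sub_sqr a r s :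
  0 <= r -> 0 <= s -> 0 < a*(r^2 - s^2) -> 0 < a*(r - s).
Proof. intros. nra. Qed.

Lemma div_lt_div_of_sign a r s :
  a*(r - 1) < 0 -> a*(s - 1) < 0 -> 0 < a*(r - s) -> a/(r - 1) < a/(s - 1).
Proof.
  intros hr hs hrs.
  assert (hrs1 : 0 < (r - 1)*(s - 1)) by nra.
  assert (e : a/(s - 1) - a/(r - 1) = a*(r - s)/((r - 1)*(s - 1)))
    by (field; split; intro; subst; nra).
  assert (0 < a*(r - s)/((r - 1)*(s - 1))) by (apply Rdiv_lt_0_compat; lra).
  lra.
Qed.

(** [-2(2+w)/3] is the smaller root of the derivative of [zcubic a]. *)
Lemma zcubic_increasing a w p1 p2 :
  0 <= w -> w^2 = 1 - 3*a -> p1 < p2 -> p2 <= -2*(2 + w)/3 ->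
  zcubic a p1 < zcubic a p2.
Proof.
  intros hw hw2 h12 h2.
  set (q1 := -2*(2 + w)/3 - p1). set (q2 := -2*(2 + w)/3 - p2).
  assert (hK : 0 < w*(q1 + q2)/4 + (q1^2 + q1*q2 + q2^2)/8).
  { assert (0 < q1) by (unfold q1; lra). assert (0 <= q2) by (unfold q2; lra).
    assert (0 <= w*(q1 + q2)) by nra. nra. }
  assert (e : zcubic a p2 - zcubic a p1
              = (p2 - p1)*(w*(q1 + q2)/4 + (q1^2 + q1*q2 + q2^2)/8)).
  { replace a with ((1 - w^2)/3) by lra. unfold q1, q2, zcubic. field. }
  assert (0 < (p2 - p1)*(w*(q1 + q2)/4 + (q1^2 + q1*q2 + q2^2)/8))
    by (apply Rmult_lt_0_compat; lra).
  lra.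
Qed.

Lemma zratio_eq_zcubic a c r :
  c <> 0 -> 1 - 4*c^2 <> 0 -> r <> 1 -> a*(1 - 4*c^2) = (r^2 - 1)*c^2 ->
  1 - 4*a*c^2 <> 0 ->
  let zeta := ((2*a - 1)*c + - c*r)/(1 - 4*a*c^2) in
  a*zeta/((2*c + zeta)*(1 + 2*zeta*c)) = zcubic a (4*a/(r - 1)).
Proof.
  intros hc hc4 hr ha hA zeta.
  assert (hfac : (1 - 4*a*c^2)*(1 - 4*c^2) = (2*c^2*(r - 1) + 1)*(1 - 2*c^2*(r + 1))).
  { transitivity (1 - 4*c^2 - 4*c^2*(a*(1 - 4*c^2))); [ring | rewrite ha; ring]. }
  assert (hm : 2*c^2*(r - 1) + 1 <> 0).
  { intro H. apply hA, (Rmult_eq_reg_r (1 - 4*c^2)); auto. rewrite hfac, H; ring. }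
  assert (hp : 1 - 2*c^2*(r + 1) <> 0).
  { intro H. apply hA, (Rmult_eq_reg_r (1 - 4*c^2)); auto. rewrite hfac, H; ring. }
  assert (hr1 : r - 1 <> 0) by lra.
  assert (h1r : 1 - r <> 0) by lra.
  assert (ea : a = (r^2 - 1)*c^2/(1 - 4*c^2)) by (rewrite <- ha; field; auto).
  unfold zeta, zcubic. clear zeta hfac hA. subst a.
  (* Once [a] is eliminated, every denominator factors over [c], [1 - 4c^2],
     [1 - r] and the two factors of [hfac]. *)
  field; repeat split; try assumption;
    match goal with |- ?e <> 0 => first
      [ replace e with ((2*c^2*(r - 1) + 1)*(1 - 2*c^2*(r + 1))) by ring
      | replace e with ((1 - 4*c^2)*(1 - 2*c^2*(r + 1))) by ring
      | replace e with (c*(1 - 4*c^2)*(1 - r)*(1 - 2*c^2*(r + 1))) by ring ] end;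
    repeat apply Rmult_integral_contrapositive_currified; auto.
Qed.

Section ZOnArc.

Variable a : R.
Hypothesis ha_le : a <= 1/3.
Hypothesis ha_neq0 : a <> 0.

Lemma radicand_ge c : -1 <= c <= -1/2 -> (1 - c^2)/3 <= (1 - 4*a)*c^2 + a.
Proof.
  intros hc.
  assert (0 <= (1/3 - a)*(4*c^2 - 1)) by (apply Rmult_le_pos; nra).
  nra.
Qed.

Lemma rho_sqr c : -1 <= c <= -1/2 -> rho a c ^ 2 = 1 - 4*a + a/c^2.
Proof.
  intros hc. pose proof (radicand_ge c hc).
  unfold rho. rewrite <- Rsqr_pow2. apply Rsqr_sqrt.
  replace (1 - 4*a + a/c^2) with (((1 - 4*a)*c^2 + a)/c^2) by (field; lra).
  apply Rdiv_le_0_compat; nra.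
Qed.

Lemma sqrt_radicand_eq c : -1 <= c <= -1/2 -> sqrt ((1 - 4*a)*c^2 + a) = - c * rho a c.
Proof.
  intros hc. pose proof (rho_sqr c hc) as hsqr. pose proof (sqrt_pos (1 - 4*a + a/c^2)).
  replace ((1 - 4*a)*c^2 + a) with (Rsqr (- c * rho a c)).
  - apply sqrt_Rsqr. unfold rho. nra.
  - unfold Rsqr. replace (- c * rho a c * (- c * rho a c)) with (c^2 * rho a c ^ 2) by ring.
    rewrite hsqr. field. lra.
Qed.

Lemma rho_sub1_sign c : -1 <= c < -1/2 -> a*(rho a c - 1) < 0.
Proof.
  intros hc.
  enough (0 < a*(1 - rho a c)) by lra.
  apply sign_sub_of_sign_sub_sqr; [lra | apply sqrt_pos |].
  rewrite rho_sqr by lra.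
  replace (a*(1^2 - (1 - 4*a + a/c^2))) with ((a*a)*(4*c^2 - 1)/c^2) by (field; lra).
  pose proof (Rsqr_pos_lt a ha_neq0).
  apply Rdiv_lt_0_compat; [apply Rmult_lt_0_compat|]; unfold Rsqr in *; nra.
Qed.

Lemma rho_neq1 c : -1 <= c < -1/2 -> rho a c <> 1.
Proof. intros hc hr. pose proof (rho_sub1_sign c hc). rewrite hr in *. lra. Qed.

Lemma pcoord_decreasing c1 c2 : -1 <= c2 -> c2 < c1 -> c1 < -1/2 ->
  pcoord a c1 < pcoord a c2.
Proof.
  intros h2 h21 h1.
  assert (hrho : 0 < a*(rho a c1 - rho a c2)).
  { apply sign_sub_of_sign_sub_sqr; try apply sqrt_pos.
    rewrite !rho_sqr by lra.
    replace (a*(1 - 4*a + a/c1^2 - (1 - 4*a + a/c2^2)))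
      with ((a*a)*(c2^2 - c1^2)/(c1^2*c2^2)) by (field; lra).
    pose proof (Rsqr_pos_lt a ha_neq0).
    apply Rdiv_lt_0_compat; [apply Rmult_lt_0_compat | apply Rmult_lt_0_compat];
      unfold Rsqr in *; nra. }
  pose proof (rho_sub1_sign c1 ltac:(lra)). pose proof (rho_sub1_sign c2 ltac:(lra)).
  unfold pcoord. apply div_lt_div_of_sign; nra.
Qed.

Lemma pcoord_m1 : pcoord a (-1) = -4*(1 + sqrt (1 - 3*a))/3.
Proof.
  unfold pcoord, rho.
  replace (1 - 4*a + a/(-1)^2) with (1 - 3*a) by field.
  set (w := sqrt (1 - 3*a)).
  assert (hw2 : w^2 = 1 - 3*a)
    by (unfold w; rewrite <- Rsqr_pow2; apply Rsqr_sqrt; lra).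
  assert (w - 1 <> 0) by (intro; assert (w = 1) by lra; subst w; nra).
  replace (4*a) with (4*(1 - w^2)/3) by lra.
  field. assumption.
Qed.

Lemma zext_eq_zfun t : 2*PI/3 < t < PI -> 1 - 4*a*(cos t)^2 <> 0 -> zext a t = zfun a t.
Proof.
  intros ht hA. pose proof (cos_bounds_2PI3_PI t ht) as hc.
  unfold zext, pcoord, zfun, zeta.
  rewrite sqrt_radicand_eq by lra.
  rewrite (zratio_eq_zcubic a (cos t) (rho a (cos t))); try (assumption || nra).
  - apply rho_neq1. lra.
  - rewrite rho_sqr by lra. field. lra.
Qed.

Lemma zext_continuous t : 2*PI/3 < t < PI -> continuity_pt (zext a) t.
Proof.
  intros ht. pose proof (cos_bounds_2PI3_PI t ht) as hc.
  assert (hpos : 0 < 1 - 4*a + a/(cos t)^2).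
  { pose proof (radicand_ge (cos t) ltac:(lra)).
    replace (1 - 4*a + a/(cos t)^2) with (((1 - 4*a)*(cos t)^2 + a)/(cos t)^2)
      by (field; lra).
    apply Rdiv_lt_0_compat; nra. }
  assert (hr1 : rho a (cos t) - 1 <> 0) by (pose proof (rho_neq1 (cos t) ltac:(lra)); lra).
  apply continuity_pt_filterlim. change (continuous (zext a) t).
  apply (ex_derive_continuous (zext a) t).
  unfold zext, pcoord, rho, zcubic in *.
  auto_derive.
  unfold Rdiv, Rminus in hpos, hr1. simpl in hpos, hr1.
  repeat split; auto; rewrite Rmult_1_r; apply Rmult_integral_contrapositive_currified; lra.
Qed.

Lemma zext_increasing s t : 2*PI/3 < s -> s < t -> t < PI -> zext a s < zext a t.
Proof.
  intros hs hst ht.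
  pose proof (cos_bounds_2PI3_PI s ltac:(lra)). pose proof (cos_bounds_2PI3_PI t ltac:(lra)).
  pose proof (cos_decreasing_2PI3_PI s t hs hst ht).
  apply zcubic_increasing with (w := sqrt (1 - 3*a)).
  - apply sqrt_pos.
  - rewrite <- Rsqr_pow2. apply Rsqr_sqrt. lra.
  - apply pcoord_decreasing; lra.
  - assert (pcoord a (cos t) < pcoord a (-1)) by (apply pcoord_decreasing; lra).
    pose proof (sqrt_pos (1 - 3*a)). rewrite pcoord_m1 in *. lra.
Qed.

End ZOnArc.

Theorem lemma2p8 (a : R) (ha1 : -1 <= a) (ha2 : a <= 1/3) (ha0 : a <> 0) :
  exists Z : R -> R,
    (forall t, 2*PI/3 < t < PI -> 1 - 4*a*(cos t)^2 <> 0 -> Z t = zfun a t) /\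
    (forall t, 2*PI/3 < t < PI -> continuity_pt Z t) /\
    (forall s t, 2*PI/3 < s -> s < t -> t < PI -> Z s < Z t).
Proof.
  exists (zext a). split; [|split].
  - exact (zext_eq_zfun a ha2 ha0).
  - exact (zext_continuous a ha2 ha0).
  - exact (zext_increasing a ha2 ha0).
Qed.
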